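(* Let $H_0$ be a Hermitian operator on a finite-dimensional Hilbert space with ground-space projection $P_0$, $Q_0=I-P_0$, ground energy $E_0$, $G=Q_0(E_0I-H_0)^{-1}Q_0$, and $V$ Hermitian. Suppose $L$ is an integer with $P_0\Gamma(n)P_0\subseteq\mathbb{C}P_0$ for all $n<L$. Then for any $k\ge1$ and integers $n_1,\dots,n_{2k}\in\mathbb{N}$ with $\sum_{j=1}^{2k}n_j<L$, and any $T_{n_j}\in\Gamma^\star(n_j)$, $j=1,\dots,2k$, we have $T_{n_1}\cdots T_{n_{2k}}P_0\in\mathbb{C}P_0$ and $P_0T_{n_1}\cdots T_{n_{2k}}\in\mathbb{C}P_0$.
   Context: $\Gamma(n)$ is the linear span of operators $Z_0VZ_1V\cdots Z_{n-1}VZ_n$ ($n$ factors of $V$) with each $Z_j\in\{P_0,Q_0\}\cup\{G^m:m\in\mathbb{N}\}$; $\Gamma^\star(n)\subseteq\Gamma(n)$ is the span of such products that additionally satisfy $Z_0Z_n=Z_nZ_0=0$. *)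

From HB Require Import structures.
From mathcomp Require Import all_boot all_order all_algebra.
Set Implicit Arguments. Unset Strict Implicit. Unset Printing Implicit Defensive.
Import Order.TTheory GRing.Theory Num.Theory.
Local Open Scope ring_scope.

Section Defs.
Variables (C : numClosedFieldType) (d : nat).
Local Notation mx := 'M[C]_d.+1.

Definition adj (M : mx) : mx := map_mx Num.conj (M^T).
Definition herm_op (M : mx) : Prop := adj M = M.

Definition ground_energy (H0 : mx) (E0 : C) : Prop :=
  eigenvalue H0 E0 /\ forall a, eigenvalue H0 a -> E0 <= a.

Definition ground_projection (H0 : mx) (E0 : C) (P0 : mx) : Prop :=
  herm_op P0 /\ P0 * P0 = P0 /\ (P0 :=: eigenspace H0 E0)%MS.

(* G = Q0 (E0 I - H0)^{-1} Q0, the inverse being taken on the range of Q0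
   (reduced resolvent).  Since H0 commutes with P0, E0 I - H0 + P0 is
   invertible and this equals Q0 (E0 I - H0 + P0)^{-1} Q0. *)
Definition reduced_resolvent (H0 : mx) (E0 : C) (P0 : mx) : mx :=
  (1 - P0) * invmx (E0%:M - H0 + P0) * (1 - P0).

(* The letters Z_j : P0, Q0, or G^m with m >= 1 (ZG m stands for G^(m.+1)) *)
Inductive letter := ZP | ZQ | ZG of nat.

Definition eval_letter (P0 G : mx) (z : letter) : mx :=
  match z with ZP => P0 | ZQ => 1 - P0 | ZG m => G ^+ m.+1 end.

Fixpoint word_prod (P0 G V : mx) (z0 : letter) (zs : seq letter) : mx :=
  match zs with
  | [::] => eval_letter P0 G z0
  | z :: zs' => eval_letter P0 G z0 * V * word_prod P0 G V z zs'
  end.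

Definition Gamma (P0 G V : mx) (n : nat) (T : mx) : Prop :=
  exists s : seq (C * (letter * seq letter)),
    all (fun p => size p.2.2 == n) s /\
    T = \sum_(p <- s) p.1 *: word_prod P0 G V p.2.1 p.2.2.

Definition Gamma_star (P0 G V : mx) (n : nat) (T : mx) : Prop :=
  exists s : seq (C * (letter * seq letter)),
    all (fun p =>
       [&& size p.2.2 == n,
           eval_letter P0 G p.2.1 * eval_letter P0 G (last p.2.1 p.2.2) == 0 &
           eval_letter P0 G (last p.2.1 p.2.2) * eval_letter P0 G p.2.1 == 0]) s /\
    T = \sum_(p <- s) p.1 *: word_prod P0 G V p.2.1 p.2.2.

Definition in_CP0 (P0 M : mx) : Prop := exists c : C, M = c *: P0.

End Defs.

From HB Require Import structures.
From mathcomp Require Import all_boot all_order all_algebra.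
Import Order.TTheory GRing.Theory Num.Theory.
Local Open Scope ring_scope.
Set Implicit Arguments.
Unset Strict Implicit.
Unset Printing Implicit Defensive.

(* Write Q0 = 1 - P0 and G = Q0 R with R = (E0 - H0 + P0)^-1, which commutes
   with P0 because the Hermitian H0 does.  Every letter is P0 or of the form Q0 R^e, so the product of two
   letters is a letter or 0 and Gamma(m) Gamma(n) is contained in
   Gamma(m + n).  In a word of Gamma*(n) the condition Z0 Zn = 0 forces the end
   letters to be of different kinds (R being invertible), unless the word
   vanishes; hence every T in Gamma*(n) is block off-diagonal: P0 T = T Q0.
   A product X of an even number of such operators then commutes with P0, so
   X P0 = P0 X = P0 X P0, and X lies in Gamma(n_1 + ... + n_2k), where the
   hypothesis applies. *)

Section Idempotent.
Variables (A : pzRingType) (p : A).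
Hypothesis p_idem : p * p = p.

Lemma idem_compl : (1 - p) * (1 - p) = 1 - p.
Proof. by rewrite mulrBl mul1r mulrBr mulr1 p_idem subrr subr0. Qed.

Lemma mul_idem_compl : p * (1 - p) = 0.
Proof. by rewrite mulrBr mulr1 p_idem subrr. Qed.

Lemma mul_compl_idem : (1 - p) * p = 0.
Proof. by rewrite mulrBl mul1r p_idem subrr. Qed.

End Idempotent.

Section Graded.
Variables (A : pzRingType) (p : A).

(* [graded false x]: x is block diagonal for the splitting 1 = p + (1 - p);
   [graded true x]: x is block off-diagonal. *)
Definition graded (b : bool) (x : A) : Prop :=
  p * x = x * (if b then 1 - p else p).

Lemma graded_mul b c x y :
  graded b x -> graded c y -> graded (b (+) c) (x * y).
Proof.
have compl_mul (z q : A) : p * z = z * q -> (1 - p) * z = z * (1 - q).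
  by move=> h; rewrite mulrBl mulrBr mul1r mulr1 h.
rewrite /graded => hx hy; rewrite mulrA hx -mulrA.
by case: b c hy {hx} => [] [] /= hy; rewrite ?(compl_mul _ _ hy) ?hy ?subKr mulrA.
Qed.

Lemma graded_prod n (F : 'I_n -> A) :
  (forall j, graded true (F j)) -> graded (odd n) (\prod_(j < n) F j).
Proof.
elim: n F => [|n IH] F hF; first by rewrite big_ord0 /graded mulr1 mul1r.
by rewrite big_ord_recr /= -addbT; apply: graded_mul (IH _ _) (hF _).
Qed.

End Graded.

Section Words.
Variables (C : numClosedFieldType) (d : nat).
Local Notation mx := 'M[C]_d.+1.
Variables (P0 R G V : mx).
Hypotheses (P0_idem : P0 * P0 = P0) (R_comm : GRing.comm P0 R).
Hypotheses (R_unit : R \is a GRing.unit) (G_def : G = (1 - P0) * R).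
Local Notation Q0 := (1 - P0).
Local Notation ev := (eval_letter P0 G).
Local Notation word := (word_prod P0 G V).

Lemma Q0_comm_Rexp e : GRing.comm Q0 (R ^+ e).
Proof.
by apply: commrX; rewrite /GRing.comm mulrBl mulrBr mul1r mulr1 R_comm.
Qed.

Lemma Q0_Rexp_mul a b : Q0 * R ^+ a * (Q0 * R ^+ b) = Q0 * R ^+ (a + b).
Proof.
by rewrite mulrA -(mulrA Q0) -Q0_comm_Rexp mulrA idem_compl // -mulrA -exprD.
Qed.

Lemma Q0_Rexp_P0 e : Q0 * R ^+ e * P0 = 0.
Proof.
have P0_comm : GRing.comm P0 (R ^+ e) by apply: commrX.
by rewrite -mulrA -P0_comm mulrA mul_compl_idem // mul0r.
Qed.

(* The excited letters ZQ and ZG m evaluate to Q0 R^0 and Q0 R^(m+1). *)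
Definition excited (z : letter) : bool := if z is ZP then false else true.
Definition letter_exp (z : letter) : nat := if z is ZG m then m.+1 else 0.
Definition exp_letter (e : nat) : letter := if e is m.+1 then ZG m else ZQ.

Lemma G_exp e : G ^+ e.+1 = Q0 * R ^+ e.+1.
Proof.
elim: e => [|e IH]; first by rewrite G_def.
by rewrite exprSr IH G_def -{2}(expr1 R) Q0_Rexp_mul addn1.
Qed.

Lemma ev_exp_letter e : ev (exp_letter e) = Q0 * R ^+ e.
Proof. by case: e => [|e] /=; rewrite ?G_exp // expr0 mulr1. Qed.

Lemma ev_excited z : excited z -> ev z = Q0 * R ^+ letter_exp z.
Proof. by move=> hz; rewrite -ev_exp_letter; case: z hz. Qed.

Lemma ev_ground z : ~~ excited z -> ev z = P0.
Proof. by case: z. Qed.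

Lemma excited_mulQ0 z : excited z -> ev z * Q0 = ev z.
Proof.
by move=> hz; rewrite ev_excited // -mulrA -Q0_comm_Rexp mulrA idem_compl.
Qed.

Lemma P0_mul_excited z : excited z -> P0 * ev z = 0.
Proof. by move=> hz; rewrite ev_excited // mulrA mul_idem_compl ?mul0r. Qed.

Lemma mul_letters x y : exists c z, ev x * ev y = c *: ev z.
Proof.
case: (boolP (excited x)) => hx; case: (boolP (excited y)) => hy; last first.
- by exists 1, ZP; rewrite scale1r (ev_ground hx) (ev_ground hy) P0_idem.
- by exists 0, ZP; rewrite scale0r (ev_ground hx) P0_mul_excited.
- by exists 0, ZP; rewrite scale0r (ev_excited hx) (ev_ground hy) Q0_Rexp_P0.
exists 1, (exp_letter (letter_exp x + letter_exp y)).
by rewrite scale1r ev_exp_letter (ev_excited hx) (ev_excited hy) Q0_Rexp_mul.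
Qed.

Lemma excited_mul_eq0 x y : excited x -> excited y -> ev x * ev y = 0 -> Q0 = 0.
Proof.
move=> hx hy; rewrite (ev_excited hx) (ev_excited hy) Q0_Rexp_mul => h.
by rewrite -(mulrK (unitrX (letter_exp x + letter_exp y) R_unit) Q0) h mul0r.
Qed.

Lemma word_mull (B : mx) w y c ws :
  B * ev w = c *: ev y -> B * word w ws = c *: word y ws.
Proof. by case: ws => [|w' ws] //= h; rewrite !mulrA h -!scalerAl. Qed.

Lemma word_mul z0 zs w0 ws : exists c y ys,
  size ys = (size zs + size ws)%N /\ word z0 zs * word w0 ws = c *: word y ys.
Proof.
elim: zs z0 => [|z zs IH] z0 /=.
  have [c [y h]] := mul_letters z0 w0.
  by exists c, y, ws; split => //; apply: word_mull.
have [c [y [ys [hs h]]]] := IH z.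
by exists c, z0, (y :: ys); rewrite /= hs -mulrA h -scalerAr.
Qed.

Lemma word_head z0 zs : exists Y, word z0 zs = ev z0 * Y.
Proof. by case: zs => [|z zs] /=; [exists 1; rewrite mulr1 | eexists; rewrite -mulrA]. Qed.

Lemma word_last z0 zs : exists Y, word z0 zs = Y * ev (last z0 zs).
Proof.
elim: zs z0 => [|z zs IH] z0 /=; first by exists 1; rewrite mul1r.
by have [Y ->] := IH z; exists (ev z0 * V * Y); rewrite !mulrA.
Qed.

Lemma word_graded z0 zs :
  ev z0 * ev (last z0 zs) = 0 -> graded P0 true (word z0 zs).
Proof.
set zl := last z0 zs => h0; rewrite /graded.
have [Y hY] := word_head z0 zs; have [Y' hY'] := word_last z0 zs.
case: (boolP (excited z0)) => hz0; case: (boolP (excited zl)) => hzl; last first.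
- rewrite hY (ev_ground hz0).
  by move: h0; rewrite (ev_ground hz0) (ev_ground hzl) P0_idem => ->; rewrite !mul0r.
- have -> : P0 * word z0 zs = word z0 zs.
    by rewrite hY (ev_ground hz0) mulrA P0_idem.
  by rewrite {2}hY' -mulrA excited_mulQ0 // -hY'.
- rewrite {1}hY mulrA P0_mul_excited // mul0r.
  by rewrite hY' -mulrA (ev_ground hzl) mul_idem_compl // mulr0.
- have Q00 := excited_mul_eq0 hz0 hzl h0.
  by rewrite hY (ev_excited hz0) Q00 !(mul0r, mulr0).
Qed.

Lemma Gamma_ind (S : mx -> Prop) n :
  S 0 -> (forall c z0 zs M, size zs = n -> S M -> S (c *: word z0 zs + M)) ->
  forall T, Gamma P0 G V n T -> S T.
Proof.
move=> S0 SD T [s [hs ->]]; elim: s hs => [|[c [z0 zs]] s IH] /=.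
  by rewrite big_nil.
by case/andP=> /eqP hz hs; rewrite big_cons; apply: SD => //; apply: IH.
Qed.

Lemma Gamma0 n : Gamma P0 G V n 0.
Proof. by exists [::]; rewrite big_nil. Qed.

Lemma GammaD n x y :
  Gamma P0 G V n x -> Gamma P0 G V n y -> Gamma P0 G V n (x + y).
Proof.
by move=> [s [hs ->]] [t [ht ->]]; exists (s ++ t); rewrite all_cat hs ht big_cat.
Qed.

Lemma GammaZ n c x : Gamma P0 G V n x -> Gamma P0 G V n (c *: x).
Proof.
move=> [s [hs ->]]; exists [seq (c * p.1, p.2) | p <- s].
rewrite all_map big_map scaler_sumr; split; first exact: hs.
by apply: eq_bigr => p _; rewrite scalerA.
Qed.

Lemma Gamma_word z0 zs : Gamma P0 G V (size zs) (word z0 zs).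
Proof. by exists [:: (1, (z0, zs))]; rewrite /= eqxx big_seq1 scale1r. Qed.

Lemma Gamma1 : Gamma P0 G V 0 1.
Proof.
rewrite -(subrK P0 1) addrC.
by apply: GammaD; [apply: (Gamma_word ZP [::]) | apply: (Gamma_word ZQ [::])].
Qed.

Lemma Gamma_mul m n x y :
  Gamma P0 G V m x -> Gamma P0 G V n y -> Gamma P0 G V (m + n) (x * y).
Proof.
move=> hx hy; move: x hx; apply: Gamma_ind => [|c z0 zs M <- hM].
  by rewrite mul0r; apply: Gamma0.
rewrite mulrDl -scalerAl; apply: GammaD hM; apply: GammaZ.
move: y hy; apply: Gamma_ind => [|c' w0 ws M' <- hM'].
  by rewrite mulr0; apply: Gamma0.
rewrite mulrDr -scalerAr; apply: GammaD hM'; apply: GammaZ.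
have [c'' [y [ys [hs ->]]]] := word_mul z0 zs w0 ws.
by rewrite -hs; apply/GammaZ/Gamma_word.
Qed.

Lemma Gamma_prod k (ns : 'I_k -> nat) (F : 'I_k -> mx) :
  (forall j, Gamma P0 G V (ns j) (F j)) ->
  Gamma P0 G V (\sum_(j < k) ns j) (\prod_(j < k) F j).
Proof.
elim: k ns F => [|k IH] ns F hF; first by rewrite !big_ord0; apply: Gamma1.
by rewrite !big_ord_recr /=; apply: Gamma_mul (IH _ _ _) (hF _) => j.
Qed.

Lemma Gamma_star_Gamma n T : Gamma_star P0 G V n T -> Gamma P0 G V n T.
Proof. by move=> [s [hs ->]]; exists s; split=> //; apply: sub_all hs => p /and3P[]. Qed.

Lemma Gamma_star_graded n T : Gamma_star P0 G V n T -> graded P0 true T.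
Proof.
move=> [s [hs ->]]; rewrite /graded /=; elim: s hs => [|p s IH] /=.
  by rewrite big_nil mulr0 mul0r.
case/andP=> /and3P[_ /eqP h _] hs; rewrite !big_cons mulrDr mulrDl IH //.
by rewrite -scalerAr -scalerAl (word_graded h).
Qed.

Lemma even_prod_Gamma_star_in_CP0 L n (ns : 'I_n -> nat) (Ts : 'I_n -> mx) :
  (forall m, (m < L)%N -> forall T, Gamma P0 G V m T -> in_CP0 P0 (P0 * T * P0)) ->
  ~~ odd n -> (\sum_(j < n) ns j < L)%N ->
  (forall j, Gamma_star P0 G V (ns j) (Ts j)) ->
  in_CP0 P0 ((\prod_(j < n) Ts j) * P0) /\ in_CP0 P0 (P0 * \prod_(j < n) Ts j).
Proof.
move=> hL n_even hsum hT; set X := \prod_(j < n) Ts j.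
have X_Gamma : Gamma P0 G V (\sum_(j < n) ns j) X.
  by apply: Gamma_prod => j; apply: Gamma_star_Gamma.
have X_comm : P0 * X = X * P0.
  by have := graded_prod (fun j => Gamma_star_graded (hT j)); rewrite (negbTE n_even).
have XP0 : P0 * X * P0 = X * P0 by rewrite X_comm -mulrA P0_idem.
have P0X : P0 * X * P0 = P0 * X by rewrite -mulrA -X_comm mulrA P0_idem.
by split; [rewrite -XP0 | rewrite -P0X]; apply: hL hsum _ X_Gamma.
Qed.

End Words.

Section GroundSpace.
Variables (C : numClosedFieldType) (d : nat).
Local Notation mx := 'M[C]_d.+1.

Lemma adjM (A B : mx) : adj (A * B) = adj B * adj A.
Proof. by rewrite /adj -!mulmxE trmx_mul map_mxM. Qed.

Lemma adjZ (a : C) (A : mx) : adj (a *: A) = a^* *: adj A.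
Proof. by rewrite /adj linearZ /= map_mxZ. Qed.

Variables (H0 P0 : mx) (E0 : C).
Hypotheses (H0_herm : herm_op H0) (P0_herm : herm_op P0).
Hypotheses (P0_idem : P0 * P0 = P0) (P0_eigen : (P0 :=: eigenspace H0 E0)%MS).
Local Notation A := (E0%:M - H0 + P0).

Lemma P0_mul_H0 : P0 * H0 = E0 *: P0.
Proof. by apply/eigenspaceP; rewrite P0_eigen. Qed.

Lemma H0_mul_P0 : H0 * P0 = E0 *: P0.
Proof.
have H0P0 : H0 * P0 = E0^* *: P0.
  by have := congr1 (@adj C d) P0_mul_H0; rewrite adjM adjZ H0_herm P0_herm.
rewrite H0P0; apply/esym.
by rewrite -{1}P0_idem scalerAl -P0_mul_H0 -mulrA H0P0 -scalerAr P0_idem.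
Qed.

Lemma shift_comm : GRing.comm P0 A.
Proof.
rewrite /GRing.comm mulrDl mulrBl mulrDr mulrBr -!mulmxE.
by rewrite mul_scalar_mx mul_mx_scalar !mulmxE H0_mul_P0 P0_mul_H0.
Qed.

Lemma shift_mul_P0 : A * P0 = P0.
Proof.
by rewrite mulrDl mulrBl -mulmxE mul_scalar_mx mulmxE H0_mul_P0 P0_idem subrr add0r.
Qed.

(* Rows killed by A are killed by P0 (as A P0 = P0), so they are eigenvectors
   of H0 for E0, i.e. lie in the row space of P0, which they are orthogonal to. *)
Lemma shift_ker_eq0 m (K : 'M[C]_(m, d.+1)) : K *m A = 0 -> K = 0.
Proof.
move=> KA; have KP0 : K *m P0 = 0 by rewrite -shift_mul_P0 -mulmxE mulmxA KA mul0mx.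
have /eigenspaceP : K *m H0 = E0 *: K.
  move/eqP: KA; rewrite mulmxDr KP0 addr0 mulmxBr subr_eq0 mul_mx_scalar.
  by move=> /eqP ->.
rewrite -P0_eigen => /submxP[D KD].
by rewrite KD -{1}P0_idem -mulmxE mulmxA -KD.
Qed.

Lemma shift_unit : A \is a GRing.unit.
Proof.
change (A \in unitmx).
by rewrite -row_free_unit -kermx_eq0; apply/eqP/shift_ker_eq0/mulmx_ker.
Qed.

Lemma reduced_resolventE : reduced_resolvent H0 E0 P0 = (1 - P0) * A^-1.
Proof.
have P0_comm_inv : GRing.comm P0 A^-1 by apply/commrV/shift_comm.
have Q0_comm_inv : GRing.comm (1 - P0) A^-1.
  by rewrite /GRing.comm mulrBl mulrBr mul1r mulr1 P0_comm_inv.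
by rewrite /reduced_resolvent -mulrA -Q0_comm_inv mulrA idem_compl.
Qed.

End GroundSpace.

Theorem lemma4 (C : numClosedFieldType) (d : nat) (H0 V P0 : 'M[C]_d.+1)
  (E0 : C) (L : nat) :
  herm_op H0 -> herm_op V ->
  ground_energy H0 E0 -> ground_projection H0 E0 P0 ->
  let G := reduced_resolvent H0 E0 P0 in
  (forall n, (n < L)%N -> forall T, Gamma P0 G V n T ->
     in_CP0 P0 (P0 * T * P0)) ->
  forall (k : nat) (ns : 'I_(2 * k) -> nat) (Ts : 'I_(2 * k) -> 'M[C]_d.+1),
  (1 <= k)%N ->
  (\sum_(j < 2 * k) ns j < L)%N ->
  (forall j, Gamma_star P0 G V (ns j) (Ts j)) ->
  in_CP0 P0 ((\prod_(j < 2 * k) Ts j) * P0) /\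
  in_CP0 P0 (P0 * \prod_(j < 2 * k) Ts j).
Proof.
move=> H0_herm _ _ [P0_herm [P0_idem P0_eigen]] G hL k ns Ts _ hsum hT.
have R_comm := commrV (shift_comm H0_herm P0_herm P0_idem P0_eigen).
have R_unit : (E0%:M - H0 + P0)^-1 \is a GRing.unit.
  by rewrite unitrV (shift_unit H0_herm P0_herm P0_idem P0_eigen).
have G_def := reduced_resolventE H0_herm P0_herm P0_idem P0_eigen.
apply: (even_prod_Gamma_star_in_CP0 P0_idem R_comm R_unit G_def hL _ hsum hT).
by rewrite oddM.
Qed.
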